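(* Let $\mathbb{C}$ be a locally small category and $\mathbb{C}_{\mathit{fin}}$ a full subcategory satisfying (C1)–(C5) below. Let $\mathbb{A}$ be a full subcategory of $\mathbb{C}_{\mathit{fin}}$ and let $F\in\mathrm{Ob}(\mathbb{C})$ be universal and locally finite for $\mathbb{A}$. Then for all integers $t\ge2$ and all $A\in\mathrm{Ob}(\mathbb{A})$ the following are equivalent: (1) $t_{\mathbb{A}}(A)\le t$; (2) $F\to(B)^A_{<\omega,t}$ for all $B\in\mathrm{Ob}(\mathbb{A})$ with $A\to B$; (3) for all $B\in\mathrm{Ob}(\mathbb{A})$ with $A\to B$ there is a coloring $\lambda:\hom(A,B)\to\{0,\dots,t-1\}$ which is essential at $B$.
   Context: Write $A\to B$ if $\hom(A,B)\ne\varnothing$. Conditions: (C1) all morphisms of $\mathbb{C}$ are monomorphisms; (C2) $\mathrm{Ob}(\mathbb{C}_{\mathit{fin}})$ is a set; (C3) $\hom(A,B)$ is finite for $A,B\in\mathrm{Ob}(\mathbb{C}_{\mathit{fin}})$; (C4) for every $F\in\mathrm{Ob}(\mathbb{C})$ there is $A\in\mathrm{Ob}(\mathbb{C}_{\mathit{fin}})$ with $A\to F$; (C5) for every $B\in\mathrm{Ob}(\mathbb{C}_{\mathit{fin}})$ the set $\{A\in\mathrm{Ob}(\mathbb{C}_{\mathit{fin}}):A\to B\}$ is finite. $F$ is universal for $\mathbb{A}$ if $A\to F$ for all $A\in\mathrm{Ob}(\mathbb{A})$. $F$ is locally finite for $\mathbb{A}$ if for all $A,B\in\mathrm{Ob}(\mathbb{A})$,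 $e\in\hom(A,F)$, $f\in\hom(B,F)$ there exist $D\in\mathrm{Ob}(\mathbb{A})$, $r\in\hom(D,F)$, $p\in\hom(A,D)$, $q\in\hom(B,D)$ with $r\cdot p=e$, $r\cdot q=f$, such that for every $H\in\mathrm{Ob}(\mathbb{C})$, $r'\in\hom(H,F)$, $p'\in\hom(A,H)$, $q'\in\hom(B,H)$ with $r'\cdot p'=e$, $r'\cdot q'=f$ there is $s\in\hom(D,H)$ with $r'\cdot s=r$, $s\cdot p=p'$, $s\cdot q=q'$. For objects $A,B,C$ and integers $k\ge2$, $t\ge1$: $C\to(B)^A_{k,t}$ means that for every $\chi:\hom(A,C)\to\{0,\dots,k-1\}$ there is $w\in\hom(B,C)$ with $|\chi(w\cdot\hom(A,B))|\le t$; $C\to(B)^A_{<\omega,t}$ means $C\to(B)^A_{k,t}$ for all $k\ge2$. $t_{\mathbb{A}}(A)$ is the least positive $n$ such that for all $k\ge2$ and all $B\in\mathrm{Ob}(\mathbb{A})$ there is $C\in\mathrm{Ob}(\mathbb{A})$ with $C\to(B)^A_{k,n}$, and $\infty$ otherwise. For $\chi:\hom(A,F)\to\{0,\dots,k-1\}$ and $w\in\hom(B,F)$, $\chi^{(w)}:\hom(A,B)\to\{0,\dots,k-1\}$ is $\chi^{(w)}(f)=\chi(w\cdot f)$. The kernel of a function $g$ is $\ker g=\{(x,y):g(x)=g(y)\}$. A coloring $\lambda:\hom(A,B)\to\{0,\dots,t-1\}$ is essential at $B$ (with respect to $F$) if for every $k\ge2$ and every $\chi:\hom(A,F)\to\{0,\dots,k-1\}$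 there is $w\in\hom(B,F)$ with $\ker\lambda\subseteq\ker\chi^{(w)}$. *)

From mathcomp Require Import all_boot.
From mathcomp Require Import boolp.
From Stdlib Require List.
Set Implicit Arguments. Unset Strict Implicit. Unset Printing Implicit Defensive.

(* A (locally small) category: hom-sets are types, equality of morphisms is
   Leibniz equality. *)
Record category := Category {
  Ob :> Type;
  hom : Ob -> Ob -> Type;
  comp : forall (A B D : Ob), hom B D -> hom A B -> hom A D;
  idm : forall A : Ob, hom A A;
  compA : forall (A B D E : Ob) (h : hom D E) (g : hom B D) (f : hom A B),
      comp h (comp g f) = comp (comp h g) f;
  comp1m : forall (A B : Ob) (f : hom A B), comp (idm B) f = f;
  compm1 : forall (A B : Ob) (f : hom A B), comp f (idm A) = f
}.
Arguments hom {c}.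
Arguments comp {c A B D}.
Arguments idm {c}.

Section Defs.
Variable C : category.

Definition arrow (A B : C) : Prop := inhabited (hom A B).

Definition mono (A B : C) (f : hom A B) : Prop :=
  forall (X : C) (g h : hom X A), comp f g = comp f h -> g = h.

Definition finite_type (T : Type) : Prop := exists s : list T, forall x, List.In x s.

(* Full subcategories are given by predicates on objects (Cfin, Aob). *)
Definition C1 : Prop := forall (A B : C) (f : hom A B), mono f.
Definition C3 (Cfin : C -> Prop) : Prop :=
  forall A B : C, Cfin A -> Cfin B -> finite_type (hom A B).
Definition C4 (Cfin : C -> Prop) : Prop :=
  forall F : C, exists A : C, Cfin A /\ arrow A F.
Definition C5 (Cfin : C -> Prop) : Prop :=
  forall B : C, Cfin B ->
    exists s : list C, forall A : C, Cfin A -> arrow A B -> List.In A s.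

Definition universal (Aob : C -> Prop) (F : C) : Prop :=
  forall A : C, Aob A -> arrow A F.

Definition locally_finite (Aob : C -> Prop) (F : C) : Prop :=
  forall (A B : C), Aob A -> Aob B ->
  forall (e : hom A F) (f : hom B F),
  exists (D : C) (r : hom D F) (p : hom A D) (q : hom B D),
    [/\ Aob D, comp r p = e, comp r q = f &
     forall (H : C) (r' : hom H F) (p' : hom A H) (q' : hom B H),
       comp r' p' = e -> comp r' q' = f ->
       exists s : hom D H, [/\ comp r' s = r, comp s p = p' & comp s q = q']].

Definition col_image (A B D : C) (k : nat) (chi : hom A D -> 'I_k) (w : hom B D)
  : {set 'I_k} :=
  finset (fun c : 'I_k => `[< exists f : hom A B, chi (comp w f) = c >]).

Definition erdos_rado (D B A : C) (k t : nat) : Prop :=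
  forall chi : hom A D -> 'I_k, exists w : hom B D, #|col_image chi w| <= t.

Definition erdos_rado_fin (D B A : C) (t : nat) : Prop :=
  forall k, 2 <= k -> erdos_rado D B A k t.

Definition tA_ok (Aob : C -> Prop) (A : C) (n : nat) : Prop :=
  forall k, 2 <= k -> forall B : C, Aob B ->
    exists D : C, Aob D /\ erdos_rado D B A k n.

Definition tA_pred (Aob : C -> Prop) (A : C) : pred nat :=
  fun n => `[< 0 < n /\ tA_ok Aob A n >].

Lemma tA_ex (Aob : C -> Prop) (A : C) :
  (exists n, 0 < n /\ tA_ok Aob A n) -> exists n, tA_pred Aob A n.
Proof. by move=> [n Hn]; exists n; apply/asboolP. Qed.

(* t_A(A) : None stands for infinity *)
Definition tA (Aob : C -> Prop) (A : C) : option nat :=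
  match pselect (exists n, 0 < n /\ tA_ok Aob A n) with
  | left H => Some (ex_minn (tA_ex H))
  | right _ => None
  end.

Definition ole (x : option nat) (t : nat) : bool :=
  if x is Some n then n <= t else false.

Definition ker (X Y : Type) (g : X -> Y) : X -> X -> Prop := fun x y => g x = g y.

Definition restr_col (A B F : C) (k : nat) (chi : hom A F -> 'I_k) (w : hom B F)
  : hom A B -> 'I_k := fun f => chi (comp w f).

Definition essential (F A B : C) (t : nat) (lam : hom A B -> 'I_t) : Prop :=
  forall k, 2 <= k -> forall chi : hom A F -> 'I_k,
    exists w : hom B F, forall f g, ker lam f g -> ker (restr_col chi w) f g.

End Defs.

(* (1) -> (2): a witness D for t_A(A) <= t embeds into F by universality, and
   colourings of hom(A, F) pull back along the embedding.
   (2) -> (3): since hom(A, B) is finite there are only finitely many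
   lam : hom(A, B) -> t.  If each were defeated by some colouring chi_lam of
   hom(A, F), apply (2) to the common refinement chi of these finitely many
   colourings: the copy w of B on which chi takes at most t colours yields a
   lam with ker lam <= ker chi^(w) <= ker chi_lam^(w), a contradiction.
   (3) -> (1): an essential colouring gives F -> (B)^A_{k,t} at once.  If no
   object D of the subcategory A had this property, pick a bad colouring of
   each such D.  Any finitely many copies of B in F factor through one D -> F
   (local finiteness), which is mono (C1), so a bad colouring of D extends to
   hom(A, F).  Each badness condition only involves the finitely many values
   chi(w . f), so Tychonoff compactness of the colourings of hom(A, F) gives a
   colouring bad for every copy of B in F at once. *)

From Pilot Require Import Defs.
From mathcomp Require Import all_boot boolp.
From mathcomp Require Import finmap classical_sets cardinality filter topology.
From Stdlib Require List.
(* ssrfun also exports a [comp]; restore the categorical composition. *)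
Import Defs.
Set Implicit Arguments. Unset Strict Implicit. Unset Printing Implicit Defensive.

Lemma In_mem (T : eqType) (x : T) (s : seq T) : x \in s -> List.In x s.
Proof. by elim: s => //= a s IH; rewrite inE => /orP [/eqP ->|/IH]; [left|right]. Qed.

Local Open Scope classical_set_scope.

Lemma coloring_compactness (I J : Type) (k : nat) (c : J -> (I -> 'I_k) -> Prop)
    (S : J -> seq I) :
  (forall j (x y : I -> 'I_k), (forall i, List.In i (S j) -> x i = y i) ->
     c j x -> c j y) ->
  (forall js : seq J, exists x, forall j, List.In j js -> c j x) ->
  exists x, forall j, c j x.
Proof.
move=> c_local c_finsat.
pose X := prod_topology (fun _ : {classic I} => discrete_topology 'I_k).
have X_compact : compact [set: X].
  have := @tychonoff {classic I} _ (fun _ => setT)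
    (fun _ => @finite_compact (discrete_topology 'I_k) setT (@finite_finset 'I_k setT)).
  by congr compact; rewrite predeqE.
have nbhs_agree (p : X) (s : seq I) :
    nbhs p [set y : X | forall i, List.In i s -> y i = p i].
  elim: s => [|a s IH]; first by apply: filterS filterT => y _ i [].
  have nbhs_a : nbhs p [set y : X | y a = p a].
    by apply: (@proj_continuous {classic I} _ a p [set p a]); apply: discrete_set1.
  by apply: filterS (filterI nbhs_a IH) => y [ya ys] i /= [<-|/ys].
pose cset (j : {classic J}) := [set x : X | c j x].
have cset_finI : finI [set: {classic J}] cset.
  move=> D _; have [x Hx] := c_finsat (enum_fset D).
  by exists x => j jD; apply: Hx; apply: (@In_mem {classic J}).
have cset_filter := finI_filter cset_finI.
have [p [_ p_cluster]] := X_compact _ cset_filter filterT.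
exists p => j.
have cset_j : filter_from (finI_from [set: {classic J}] cset) id (cset j).
  by exists (cset j) => //; apply: finI_from1.
have [y [cy yp]] := p_cluster _ _ cset_j (nbhs_agree p (S j)).
by apply: c_local cy => i /yp.
Qed.

Lemma finite_type_enum (T : Type) :
  finite_type T -> exists n (e : 'I_n -> T), forall x, exists i, e i = x.
Proof.
move=> [s sP]; exists (size s), (tnth (in_tuple s)) => x.
have [i [ltis sx]] : exists i, i < size s /\ nth x s i = x.
  elim: s {sP}(sP x) => //= a s IH [->|/IH [i [ltis sx]]]; first by exists 0.
  by exists i.+1.
by exists (Ordinal ltis); rewrite (tnth_nth x).
Qed.

Lemma finite_fun_enum (T : Type) (k : nat) : finite_type T ->
  exists (G : finType) (ev : G -> T -> 'I_k), forall lam, exists g, ev g =1 lam.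
Proof.
move=> /finite_type_enum [n [e eP]]; have [idx idxK] := choice eP.
exists {ffun 'I_n -> 'I_k}, (fun (g : {ffun 'I_n -> 'I_k}) x => g (idx x)) => lam.
by exists [ffun i => lam (e i)] => x; rewrite ffunE idxK.
Qed.

Lemma common_refinement (I : finType) (X : Type) (k : I -> nat)
    (chi : forall i, X -> 'I_(k i)) :
  exists2 K, 2 <= K &
    exists c : X -> 'I_K, forall x y, c x = c y -> forall i, chi i x = chi i y.
Proof.
pose code x : {dffun forall i, 'I_(k i)} := [ffun i => chi i x].
exists #|{dffun forall i, 'I_(k i)}|.+2 => //.
exists (fun x => widen_ord (leqW (leqnSn _)) (enum_rank (code x))) => x y.
move=> /(congr1 val) /= /val_inj /enum_rank_inj cxy i.
by have := congr1 (fun f : {dffun forall i, 'I_(k i)} => f i) cxy; rewrite !ffunE.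
Qed.

Section ErdosRado.
Variable C : category.

Lemma col_imageP (A B D : C) (k : nat) (chi : hom A D -> 'I_k) (w : hom B D)
    (c : 'I_k) :
  c \in col_image chi w <-> exists f : hom A B, chi (comp w f) = c.
Proof. by rewrite inE; split => /asboolP. Qed.

Lemma mem_col_image (A B D : C) (k : nat) (chi : hom A D -> 'I_k) (w : hom B D)
    (f : hom A B) :
  chi (comp w f) \in col_image chi w.
Proof. by apply/col_imageP; exists f. Qed.

Lemma eq_col_image (A B D : C) (k : nat) (chi chi' : hom A D -> 'I_k)
    (w : hom B D) :
  (forall f : hom A B, chi (comp w f) = chi' (comp w f)) ->
  col_image chi w = col_image chi' w.
Proof.
move=> chi_eq; apply/setP => c.
by apply/idP/idP => /col_imageP [f <-]; apply/col_imageP; exists f.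
Qed.

Lemma col_image_comp (A B D E : C) (k : nat) (chi : hom A E -> 'I_k)
    (u : hom D E) (w : hom B D) :
  col_image chi (comp u w) = col_image (fun g => chi (comp u g)) w.
Proof.
apply/setP => c.
by apply/idP/idP => /col_imageP [f <-]; apply/col_imageP; exists f; rewrite compA.
Qed.

Lemma card_col_image_leP (A B D : C) (k t : nat) (chi : hom A D -> 'I_k)
    (w : hom B D) :
  #|col_image chi w| <= t <->
  exists lam : hom A B -> 'I_t,
    forall f g, ker lam f g -> ker (restr_col chi w) f g.
Proof.
split=> [le_t | [lam lamP]].
  exists (fun f => widen_ord le_t (enum_rank_in (mem_col_image chi w f) (chi (comp w f)))).
  move=> f g /(congr1 val) /= /val_inj /(congr1 enum_val).
  by rewrite !enum_rankK_in ?mem_col_image.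
have /choice [psi psiP] : forall c : {c | c \in col_image chi w},
    exists i, exists f, chi (comp w f) = val c /\ lam f = i.
  by move=> [c cS]; have [f fc] := (col_imageP _ _ _).1 cS; exists (lam f), f.
have psi_inj : injective psi.
  move=> c c'; have [f [fc <-]] := psiP c; have [g [gc <-]] := psiP c'.
  by move=> /lamP; rewrite /restr_col /ker fc gc => /val_inj.
by rewrite -(card_ord t) -card_sig; apply: leq_card psi_inj.
Qed.

Lemma erdos_rado_arrow (A B D E : C) (k t : nat) :
  arrow D E -> erdos_rado D B A k t -> erdos_rado E B A k t.
Proof.
move=> [u] er chi; have [w le_t] := er (fun g => chi (comp u g)).
by exists (comp u w); rewrite col_image_comp.
Qed.

Lemma erdos_rado_leq (A B D : C) (k t t' : nat) :
  t <= t' -> erdos_rado D B A k t -> erdos_rado D B A k t'.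
Proof.
by move=> le_tt' er chi; have [w le_t] := er chi; exists w; apply: leq_trans le_tt'.
Qed.

Lemma erdos_rado_no_arrow (A B D : C) (k t : nat) :
  ~ arrow A B -> hom B D -> erdos_rado D B A k t.
Proof.
move=> nAB w chi; exists w; apply/card_col_image_leP.
by exists (fun f => match nAB (inhabits f) with end) => f; case: (nAB (inhabits f)).
Qed.

Lemma essential_erdos_rado_fin (F A B : C) (t : nat) (lam : hom A B -> 'I_t) :
  essential F lam -> erdos_rado_fin F B A t.
Proof.
move=> ess k k_ge2 chi; have [w lamP] := ess k k_ge2 chi.
by exists w; apply/card_col_image_leP; exists lam.
Qed.

Lemma erdos_rado_fin_essential (F A B : C) (t : nat) :
  finite_type (hom A B) -> erdos_rado_fin F B A t ->
  exists lam : hom A B -> 'I_t, essential F lam.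
Proof.
move=> /(finite_fun_enum t) [G [ev evP]] er; apply: contrapT => no_ess.
have /choice [bad badP] : forall g : G, exists p : {k : nat & hom A F -> 'I_k},
    2 <= projT1 p /\ forall w : hom B F,
      ~ (forall f f', ker (ev g) f f' -> ker (restr_col (projT2 p) w) f f').
  move=> g; apply: contrapT => good; apply: no_ess; exists (ev g) => k k_ge2 chi.
  apply: contrapT => no_w; apply: good; exists (existT _ k chi); split => // w kerw.
  by apply: no_w; exists w.
have [K K_ge2 [chi chiP]] := common_refinement (fun g => projT2 (bad g)).
have [w /card_col_image_leP [lam lamP]] := er K K_ge2 chi.
have [g0 g0lam] := evP lam; have [_ g0_bad] := badP g0.
by apply: (g0_bad w) => f f'; rewrite /ker !g0lam => /lamP /chiP.
Qed.

Lemma extend_coloring_mono (A D F : C) (k : nat) (r : hom D F) :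
  mono r -> 0 < k -> forall chiD : hom A D -> 'I_k,
  exists chi : hom A F -> 'I_k, forall g, chi (comp r g) = chiD g.
Proof.
move=> r_mono k_gt0 chiD.
have /choice [chi chiP] : forall x : hom A F,
    exists c : 'I_k, forall g, comp r g = x -> chiD g = c.
  move=> x; case: (pselect (exists g, comp r g = x)) => [[g0 <-]|no_g].
    by exists (chiD g0) => g /r_mono ->.
  by exists (Ordinal k_gt0) => g rg; case: no_g; exists g.
by exists chi => g; rewrite (chiP _ g erefl).
Qed.

Lemma locally_finite_amalgam (Aob : C -> Prop) (F B : C) :
  universal Aob F -> locally_finite Aob F -> Aob B ->
  forall ws : seq (hom B F), exists D (r : hom D F),
    Aob D /\ forall w, List.In w ws -> exists p, comp r p = w.
Proof.
move=> univ lf HB; elim=> [|w ws [D [r [HD IH]]]].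
  by have [u] := univ B HB; exists B, u.
have [E [r' [p [q [HE rp rq _]]]]] := lf D B HD HB r w.
exists E, r'; split => // w' /= [<-|/IH [pw <-]]; first by exists q.
by exists (comp p pw); rewrite compA rp.
Qed.

Lemma erdos_rado_compactness (Aob : C -> Prop) (F A B : C) (k t : nat) :
  C1 C -> finite_type (hom A B) -> universal Aob F -> locally_finite Aob F ->
  Aob B -> 0 < k -> erdos_rado F B A k t ->
  exists D, Aob D /\ erdos_rado D B A k t.
Proof.
move=> HC1 [s sP] univ lf HB k_gt0 erF; apply: contrapT => no_D.
have bad_D D : Aob D ->
    exists chiD : hom A D -> 'I_k, forall p : hom B D, t < #|col_image chiD p|.
  move=> HD; apply: contrapT => good; apply: no_D; exists D; split => // chiD.
  apply: contrapT => no_p; apply: good; exists chiD => p; rewrite ltnNge.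
  by apply/negP => le_t; apply: no_p; exists p.
have [chi chiP] : exists chi : hom A F -> 'I_k,
    forall w : hom B F, t < #|col_image chi w|.
  apply: (@coloring_compactness _ _ _ (fun (w : hom B F) (chi : hom A F -> 'I_k) => t < #|col_image chi w|)
                               (fun w => map (comp w) s)).
    move=> w chi chi' agree /=; rewrite (eq_col_image (chi' := chi')) // => f.
    by apply/agree/List.in_map.
  move=> ws; have [D [r [HD rP]]] := locally_finite_amalgam univ lf HB ws.
  have [chiD chiDP] := bad_D D HD.
  have [chi chiE] := extend_coloring_mono (HC1 _ _ r) k_gt0 chiD.
  exists chi => w /rP [p <-]; rewrite col_image_comp.
  by rewrite (eq_col_image (chi' := chiD)) // => f; rewrite chiE.
by have [w] := erF chi; rewrite leqNgt chiP.
Qed.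

Lemma ole_tA (Aob : C -> Prop) (A : C) (t : nat) :
  0 < t -> ole (tA Aob A) t <-> tA_ok Aob A t.
Proof.
move=> t_gt0; rewrite /tA; case: pselect => [ex_n|no_n]; last first.
  by split => // ok_t; case: no_n; exists t.
case: ex_minnP => n /asboolP [_ ok_n] n_min /=; split => [le_nt | ok_t].
  move=> k k_ge2 B HB; have [D [HD er]] := ok_n k k_ge2 B HB.
  by exists D; split => //; apply: erdos_rado_leq er.
by apply: n_min; apply/asboolP.
Qed.

Lemma tA_ok_erdos_rado_fin (Aob : C -> Prop) (F A B : C) (t : nat) :
  universal Aob F -> tA_ok Aob A t -> Aob B -> erdos_rado_fin F B A t.
Proof.
move=> univ ok_t HB k k_ge2; have [D [HD er]] := ok_t k k_ge2 B HB.
exact: erdos_rado_arrow (univ D HD) er.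
Qed.

End ErdosRado.

Theorem lemma3p4 (C : category) (Cfin Aob : C -> Prop)
  (HC1 : C1 C) (HC3 : C3 Cfin) (HC4 : C4 Cfin) (HC5 : C5 Cfin)
  (HAfin : forall X : C, Aob X -> Cfin X)
  (F : C) (Huniv : universal Aob F) (Hlf : locally_finite Aob F)
  (t : nat) (ht : 2 <= t) (A : C) (HA : Aob A) :
  [<-> ole (tA Aob A) t;
       forall B : C, Aob B -> arrow A B -> erdos_rado_fin F B A t;
       forall B : C, Aob B -> arrow A B ->
         exists lam : hom A B -> 'I_t, essential F lam].
Proof.
have t_gt0 : 0 < t by apply: ltnW.
have fin_hom B : Aob B -> finite_type (hom A B) by move=> HB; apply: HC3; apply: HAfin.
tfae.
- by move=> /(ole_tA _ _ t_gt0) ok_t B HB _; apply: tA_ok_erdos_rado_fin ok_t HB.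
- by move=> er B HB AB; apply: erdos_rado_fin_essential (fin_hom B HB) (er B HB AB).
- move=> ess; apply/(ole_tA _ _ t_gt0) => k k_ge2 B HB.
  apply: (erdos_rado_compactness HC1 (fin_hom B HB) Huniv Hlf HB (ltnW k_ge2)).
  have [AB|nAB] := pselect (arrow A B).
    by have [lam /essential_erdos_rado_fin] := ess B HB AB; apply.
  by have [w] := Huniv B HB; apply: erdos_rado_no_arrow.
Qed.
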